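(* Let $f:\mathbf{R}^n\to[-\infty,\infty]$ be an arbitrary function and define $\underline{f}(x)=\operatorname{ap\,liminf}_{y\to x}f(y)$ for $x\in\mathbf{R}^n$. Then $\underline{f}$ is a Borel function.
   Context: For $x\in\mathbf{R}^n$, $\operatorname{ap\,liminf}_{y\to x}f(y)=\sup\bigl(\mathbf{R}\cap\{t:\Theta^n(\mathscr{L}^n\llcorner\{y:f(y)<t\},x)=0\}\bigr)$, where $\mathscr{L}^n\llcorner B$ denotes Lebesgue outer measure restricted to $B$ and $\Theta^n(\mu,x)=\lim_{r\downarrow0}\mu(\mathbf{B}(x,r))/(\alpha(n)r^n)$ (Euclidean closed balls, $\alpha(n)$ the volume of the unit ball), the density being said to exist only when this limit exists. *)

From HB Require Import structures.
From mathcomp Require Import all_boot all_order all_algebra.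
From mathcomp Require Import all_classical all_reals all_analysis.
Set Implicit Arguments. Unset Strict Implicit. Unset Printing Implicit Defensive.
Import Order.TTheory GRing.Theory Num.Theory.
Import numFieldNormedType.Exports.
Local Open Scope classical_set_scope.
Local Open Scope ring_scope.

Section Defs.
Variables (R : realType) (n : nat).

Definition enorm (v : 'rV[R]_n) : R := Num.sqrt (\sum_(i < n) (v ord0 i) ^+ 2).

Definition cball_e (x : 'rV[R]_n) (r : R) : set 'rV[R]_n :=
  [set y | enorm (y - x) <= r].

Definition box (a b : 'rV[R]_n) : set 'rV[R]_n :=
  [set y | forall i : 'I_n, a ord0 i <= y ord0 i <= b ord0 i].
Definition box_vol (a b : 'rV[R]_n) : R := \prod_(i < n) (b ord0 i - a ord0 i).

Definition lebesgue_outer (A : set 'rV[R]_n) : \bar R :=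
  ereal_inf [set s | exists a b : nat -> 'rV[R]_n,
     (forall k (i : 'I_n), a k ord0 i <= b k ord0 i) /\
     A `<=` \bigcup_k box (a k) (b k) /\
     s = (\sum_(0 <= k <oo) (box_vol (a k) (b k))%:E)%E].

(** alpha(n) = L^n of the closed unit ball (finite). *)
Definition alpha : R := fine (lebesgue_outer (cball_e 0 1)).

(** Theta^n(L^n restricted to A, x) exists and equals 0.
    (L^n(A ∩ B(x,r)) is finite since the ball is bounded.) *)
Definition density_zero (A : set 'rV[R]_n) (x : 'rV[R]_n) : Prop :=
  (fun r : R => fine (lebesgue_outer (A `&` cball_e x r)) / (alpha * r ^+ n))
    @ 0^'+ --> 0.

Definition ap_liminf (f : 'rV[R]_n -> \bar R) (x : 'rV[R]_n) : \bar R :=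
  ereal_sup [set t%:E | t in [set t : R | density_zero [set y | (f y < t%:E)%E] x]].

Definition borel_set (A : set 'rV[R]_n) : Prop := <<s [set U | open U] >> A.

Definition borel_fun (g : 'rV[R]_n -> \bar R) : Prop :=
  forall B : set (\bar R), <<s [set U : set (\bar R) | open U] >> B ->
    borel_set (g @^-1` B).

End Defs.

From HB Require Import structures.
From mathcomp Require Import all_boot all_order all_algebra.
From mathcomp Require Import all_classical all_reals all_analysis measurable_realfun.
From mathcomp Require Import ring lra.
Set Implicit Arguments. Unset Strict Implicit. Unset Printing Implicit Defensive.
Import Order.TTheory GRing.Theory Num.Theory.
Import numFieldNormedType.Exports.
Local Open Scope classical_set_scope.
Local Open Scope ring_scope.

(** For each real [r], the set [{ap_liminf f > r}] is the union over [m] of the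
    sets of points at which [{f < r + 1/(m+1)}] has density zero, so it suffices
    that the set [D(A)] of density-zero points of any set [A] is Borel.  Write
    [mu(q, rho) = L^n(A ∩ B(q, rho))] and [h_k = 1/(k+1)].  The union [O(k, e)] of
    the sup-norm balls of radius [h_k] around the centres [q] with
    [mu(q, 2n h_k) <= e h_k^n] is open, whatever [A] is.  If [x] lies in [O(k, e)]
    and [h_k/2 <= r <= h_k], then [B(x, r)] is contained in [B(q, 2n h_k)], so
    [mu(x, r) <= e (2r)^n]; conversely a density-zero point is itself such a
    centre for all large [k].  Hence [D(A)] is the Borel set
    [⋂_j ⋃_K ⋂_(k >= K) O(k, h_j)]. *)

Lemma open_emeasurable (R : realType) (U : set (\bar R)) : open U -> measurable U.
Proof.
move=> oU.
have -> : U = EFin @` (EFin @^-1` U) `|` (U `&` [set -oo%E]) `|` (U `&` [set +oo%E]).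
  apply/seteqP; split=> [[x| |] Ux|].
  - by left; left; exists x.
  - by right; split.
  - by left; right; split.
  by move=> x [[[y Uy <-]|[]]|[]].
have measurable_setI1 (y : \bar R) : measurable (U `&` [set y]).
  have [Uy|nUy] := pselect (U y).
    rewrite (_ : _ `&` _ = [set y]) ?emeasurable_set1 //.
    by apply/seteqP; split=> [x []|x ->].
  rewrite (_ : _ `&` _ = set0) //.
  by apply/seteqP; split=> [x [Ux xy]|x []]; apply: nUy; rewrite -xy.
apply: measurableU; [apply: measurableU|] => //.
apply: measurable_image_EFin; apply: open_measurable.
have /continuousP : continuous (@EFin R) by move=> x P /nbhs_EFin.
by move=> /(_ U oU).
Qed.

Lemma borel_fun_from_gt (R : realType) (n : nat) (g : 'rV[R]_n -> \bar R) :
  (forall r : R, borel_set [set x | (r%:E < g x)%E]) -> borel_fun g.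
Proof.
move=> g_gt.
suff gen_sub : <<s [set U : set (\bar R) | open U] >> `<=`
    image_set_system setT g (@borel_set R n).
  by move=> B /gen_sub; rewrite /image_set_system /= setTI.
have open_sub : <<s [set U : set (\bar R) | open U] >> `<=` measurable.
  apply: smallest_sub; [exact: sigma_algebra_measurable | exact: open_emeasurable].
move=> C /open_sub; rewrite [X in X C -> _]ErealGenOInfty.measurableE.
move: C; apply: smallest_sub; first exact/sigma_algebra_image/smallest_sigma_algebra.
move=> _ [r ->]; rewrite /image_set_system /= setTI.
rewrite (_ : _ @^-1` _ = [set x | (r%:E < g x)%E]); first exact: g_gt.
by apply/seteqP; split=> x /=; rewrite in_itv /= andbT.
Qed.

Section BorelSets.
Variables (R : realType) (n : nat).

Lemma borel_open (U : set 'rV[R]_n) : open U -> borel_set U.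
Proof. by move=> oU; apply: sub_sigma_algebra. Qed.

Lemma borel_bigcup (F : (set 'rV[R]_n)^nat) : (forall k, borel_set (F k)) ->
  borel_set (\bigcup_k F k).
Proof. exact: (@bigcupT_measurable _ (g_sigma_algebraType [set U : set 'rV_n | open U])). Qed.

Lemma borel_bigcap (F : (set 'rV[R]_n)^nat) : (forall k, borel_set (F k)) ->
  borel_set (\bigcap_k F k).
Proof. exact: (@bigcapT_measurable _ (g_sigma_algebraType [set U : set 'rV_n | open U])). Qed.

Lemma borel_eventually (P : nat -> set 'rV[R]_n) : (forall k, borel_set (P k)) ->
  borel_set [set x | \forall k \near \oo, P k x].
Proof.
move=> borelP.
have -> : [set x | \forall k \near \oo, P k x] = \bigcup_K \bigcap_k P (K + k)%N.
  apply/seteqP; split=> x /= [K _ PK]; exists K => // k.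
    by move=> _; apply: PK; rewrite /= leq_addr.
  by move=> /= Kk; have := PK (k - K)%N I; rewrite subnKC.
by apply: borel_bigcup => K; exact: borel_bigcap.
Qed.

End BorelSets.

Lemma borel_set_rV0 (R : realType) (A : set 'rV[R]_0) : borel_set A.
Proof.
have [A0|nA0] := pselect (A 0).
  rewrite (_ : A = setT); first by apply: borel_open; exact: openT.
  by apply/seteqP; split=> // x _; rewrite (thinmx0 x).
rewrite (_ : A = set0); first by apply: borel_open; exact: open0.
by apply/seteqP; split=> // x; rewrite (thinmx0 x).
Qed.

Lemma exists_harmonic_lt (R : realType) (e : R) : 0 < e -> exists m, harmonic m < e.
Proof.
move=> e_gt0; have /cvgrPdist_lt/(_ e e_gt0) [N _ hN] := @cvg_harmonic R.
by exists N; have := hN N (leqnn N); rewrite sub0r normrN ger0_norm ?harmonic_ge0.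
Qed.

Lemma harmonic_bracket (R : realType) (K : nat) (r : R) : 0 < r -> r < harmonic K ->
  exists2 k, (K <= k)%N & r <= harmonic k <= 2 * r.
Proof.
move=> r_gt0 rK; have rV_gt0 : 0 < r^-1 by rewrite invr_gt0.
have : (K < Num.truncn r^-1)%N.
  rewrite truncn_gt_nat; apply/ltW; move: rK => /=.
  by rewrite -[r in r < _]invrK ltf_pV2 ?posrE ?ltr0n.
have := truncnS_gt r^-1; have := truncn_le r^-1; rewrite (ltW rV_gt0).
(* [k.+1] is the integer part of [1/r]. *)
case: (Num.truncn r^-1) => // k k_le k_gt Kk; exists k => //=.
have rk : r <= k.+1%:R^-1 by rewrite -[r]invrK lef_pV2 ?posrE ?ltr0n.
rewrite rk /= -[_^-1]mul1r ler_pdivrMr ?ltr0n //.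
have : r^-1 * r < k.+2%:R * r by rewrite ltr_pM2r.
rewrite mulVf ?gt_eqF // -addn1 natrD => /ltW.
have : 1 <= k.+1%:R :> R by rewrite ler1n.
nra.
Qed.

Section Euclidean.
Variables (R : realType) (n : nat).
Implicit Types (x y q v : 'rV[R]_n) (r h : R).

Lemma coord_le_enorm v i : `|v ord0 i| <= enorm v.
Proof.
rewrite /enorm -sqrtr_sqr ler_sqrt; last by apply: sumr_ge0 => j _; exact: sqr_ge0.
by rewrite (bigD1 i) //= lerDl; apply: sumr_ge0 => j _; exact: sqr_ge0.
Qed.

Lemma enorm_le_coord v (M : R) : (0 < n)%N -> 0 <= M ->
  (forall i, `|v ord0 i| <= M) -> enorm v <= n%:R * M.
Proof.
move=> n_gt0 M_ge0 vM; rewrite /enorm -(ger0_norm (_ : 0 <= n%:R * M)) ?mulr_ge0 //.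
rewrite -sqrtr_sqr ler_sqrt; last exact: sqr_ge0.
apply: (@le_trans _ _ (\sum_(i < n) M ^+ 2)).
  apply: ler_sum => i _; rewrite -real_normK ?num_real //.
  by rewrite lerXn2r ?nnegrE // (le_trans (normr_ge0 _) (vM i)).
rewrite sumr_const card_ord -mulr_natl exprMn.
have : 1 <= n%:R :> R by rewrite ler1n.
have := sqr_ge0 M; rewrite expr2 -mulrA; nra.
Qed.

(** [ball q h] is the sup-norm ball of ['rV[R]_n]. *)
Lemma cball_e_sub x q r h : (0 < n)%N -> ball q h x -> r <= h ->
  cball_e x r `<=` cball_e q (n%:R * 2 * h).
Proof.
move=> n_gt0 [h_gt0 xq] rh y; rewrite /cball_e /= -mulrA => yx.
apply: enorm_le_coord => // [|i]; first by rewrite mulr_ge0 // ltW.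
have := le_trans (coord_le_enorm (y - x) i) yx; rewrite !mxE => yxi.
have := xq ord0 i; rewrite /ball /= distrC => /ltW xqi.
rewrite -(subrKA (x ord0 i)); apply: le_trans (ler_normD _ _) _; lra.
Qed.

End Euclidean.

Section Density.
Variables (R : realType) (n : nat).
Hypothesis n_gt0 : (0 < n)%N.
Implicit Types (A B : set 'rV[R]_n) (x y q : 'rV[R]_n).

Lemma le_lebesgue_outer A B : A `<=` B -> (lebesgue_outer A <= lebesgue_outer B)%E.
Proof.
move=> AB; apply: ereal_inf_le_tmp => _ [a [b [ab [Bab ->]]]].
by exists a, b; do 2 split => //; exact: subset_trans Bab.
Qed.

Lemma box_vol_ge0 (a b : 'rV[R]_n) : (forall i, a ord0 i <= b ord0 i) ->
  0 <= box_vol a b.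
Proof. by move=> ab; apply: prodr_ge0 => i _; rewrite subr_ge0. Qed.

Lemma lebesgue_outer_ge0 A : (0 <= lebesgue_outer A)%E.
Proof.
apply/ereal_infP => _ [a [b [ab [_ ->]]]].
by apply: nneseries_ge0 => k _ _; rewrite lee_fin box_vol_ge0.
Qed.

Lemma lebesgue_outer_cball_lty x r : (lebesgue_outer (cball_e x r) < +oo)%E.
Proof.
pose a k : 'rV[R]_n := if k is 0%N then \row_i (x ord0 i - `|r|) else 0.
pose b k : 'rV[R]_n := if k is 0%N then \row_i (x ord0 i + `|r|) else 0.
have ab k i : a k ord0 i <= b k ord0 i.
  by have := normr_ge0 r; case: k => [|k] /=; rewrite ?mxE //; lra.
apply: (@le_lt_trans _ _ (box_vol (a 0%N) (b 0%N))%:E); last exact: ltry.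
apply: ereal_inf_lbound; exists a, b; do 2 split => //.
  move=> y yx; exists 0%N => // i.
  have := le_trans (coord_le_enorm (y - x) i) yx; rewrite !mxE => /le_trans.
  by move=> /(_ _ (ler_norm r)); rewrite ler_distl.
rewrite (nneseries_split 0 1); last by move=> k _; rewrite lee_fin box_vol_ge0.
rewrite big_nat1 eseries0 ?adde0 // => -[|k] // _ _.
by rewrite /box_vol (bigD1 (Ordinal n_gt0)) //= !mxE subrr mul0r.
Qed.

Definition mass A x r : R := fine (lebesgue_outer (A `&` cball_e x r)).

Lemma mass_ge0 A x r : 0 <= mass A x r.
Proof. exact/fine_ge0/lebesgue_outer_ge0. Qed.

Lemma le_mass A B x y r s : A `<=` B -> cball_e x r `<=` cball_e y s ->
  mass A x r <= mass B y s.
Proof.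
have fin_mass (C : set 'rV[R]_n) z (t : R) :
    lebesgue_outer (C `&` cball_e z t) \is a fin_num.
  rewrite ge0_fin_numE ?lebesgue_outer_ge0 //.
  by apply: le_lt_trans (lebesgue_outer_cball_lty z t); apply: le_lebesgue_outer => ? [].
move=> AB xy; apply: fine_le => //.
by apply: le_lebesgue_outer => z [/AB Bz /xy].
Qed.

Lemma alpha_ge0 : 0 <= @alpha R n.
Proof. exact/fine_ge0/lebesgue_outer_ge0. Qed.

(** [x / 0 = 0], so the density quotient then vanishes identically. *)
Lemma density_zero_alpha0 A x : @alpha R n = 0 -> density_zero A x.
Proof.
rewrite /density_zero => ->; under eq_fun do rewrite mul0r invr0 mulr0.
exact: cvg_cst.
Qed.

Lemma density_zero_sub A B x : A `<=` B -> density_zero B x -> density_zero A x.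
Proof.
move=> AB; apply: squeeze_cvgr; last exact: cvg_cst.
near=> r; have r_gt0 : 0 < r by near: r; exact: nbhs_right_gt.
have den_ge0 : 0 <= (@alpha R n * r ^+ n)^-1.
  by rewrite invr_ge0 mulr_ge0 ?alpha_ge0 // exprn_ge0 // ltW.
apply/andP; split; first by rewrite mulr_ge0 ?mass_ge0.
by rewrite ler_wpM2r // le_mass.
Unshelve. all: by end_near. Qed.

Definition outer_radius k : R := n%:R * 2 * harmonic k.

Definition light_centre A e k q := mass A q (outer_radius k) <= e * harmonic k ^+ n.

Definition light_nbhd A e k := \bigcup_(q in light_centre A e k) ball q (harmonic k).

Definition eventually_light A x :=
  forall j, \forall k \near \oo, light_nbhd A (harmonic j) k x.

Lemma borel_eventually_light A : borel_set [set x | eventually_light A x].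
Proof.
rewrite (_ : [set x | _] =
    \bigcap_j [set x | \forall k \near \oo, light_nbhd A (harmonic j) k x]).
  apply: borel_bigcap => j; apply: borel_eventually => k.
  by apply: borel_open; apply: bigcup_open => q _; exact: ball_open.
by apply/seteqP; split=> x /= light j; [move=> _; exact: light | exact: light j I].
Qed.

Lemma density_zero_eventually_light A x : 0 < @alpha R n ->
  density_zero A x -> eventually_light A x.
Proof.
move=> alpha_gt0 dens j.
have n2_gt0 : 0 < n%:R * 2 :> R by rewrite mulr_gt0 ?ltr0n.
pose c := @alpha R n * (n%:R * 2) ^+ n.
have c_gt0 : 0 < c by rewrite mulr_gt0 // exprn_gt0.
have /cvgrPdist_le/(_ (harmonic j / c) (divr_gt0 (harmonic_gt0 j) c_gt0)) := dens.
move=> /nbhs_ballP [d /= d_gt0 dens_le].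
have : \forall k \near \oo, harmonic k < d / (n%:R * 2).
  by apply: cvgr_lt cvg_harmonic _ _; rewrite divr_gt0.
apply: filterS => k hk; exists x; last exact: ballxx (harmonic_gt0 k).
have rho_gt0 : 0 < outer_radius k by rewrite mulr_gt0 ?harmonic_gt0.
have rho_d : ball 0 d (outer_radius k).
  by rewrite /ball /= sub0r normrN gtr0_norm // /outer_radius mulrC -ltr_pdivlMr.
have := dens_le _ rho_d rho_gt0; rewrite -/(mass A x _) sub0r normrN ger0_norm; last first.
  by rewrite divr_ge0 ?mass_ge0 ?mulr_ge0 ?exprn_ge0 ?alpha_ge0 ?ltW.
rewrite ler_pdivrMr ?mulr_gt0 ?exprn_gt0 // => /le_trans; apply.
rewrite /c /outer_radius !exprMn le_eqVlt; apply/predU1P; left; field.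
by rewrite addrC natr1 !gt_eqF ?exprn_gt0 ?ltr0n.
Qed.

Lemma eventually_light_density_zero A x : 0 < @alpha R n ->
  eventually_light A x -> density_zero A x.
Proof.
move=> alpha_gt0 light; apply/cvgrPdist_le => e e_gt0.
have [j hj] : exists j, harmonic j < e * @alpha R n / 2 ^+ n.
  by apply: exists_harmonic_lt; rewrite !mulr_gt0 ?invr_gt0 ?exprn_gt0.
have [K _ lightK] := light j.
apply/nbhs_ballP; exists (harmonic K); first exact: harmonic_gt0.
move=> r /=; rewrite /ball /= sub0r normrN => rK r_gt0; rewrite gtr0_norm // in rK.
have [k Kk /andP[rk kr]] := harmonic_bracket r_gt0 rK.
have [q centre_q xq] := lightK k Kk.
have mass_le : mass A x r <= harmonic j * (2 * r) ^+ n.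
  apply: le_trans (le_mass (@subset_refl _ A) (cball_e_sub n_gt0 xq rk)) _.
  apply: le_trans centre_q _; rewrite ler_wpM2l ?harmonic_ge0 //.
  by rewrite lerXn2r ?nnegrE ?harmonic_ge0 ?mulr_ge0 // ltW.
rewrite -/(mass A x r) sub0r normrN ger0_norm; last first.
  by rewrite divr_ge0 ?mass_ge0 ?mulr_ge0 ?exprn_ge0 ?ltW.
rewrite ler_pdivrMr ?mulr_gt0 ?exprn_gt0 //; apply: le_trans mass_le _.
rewrite exprMn !mulrA ler_wpM2r ?exprn_ge0 ?(ltW r_gt0) //.
by rewrite -ler_pdivlMr ?exprn_gt0 //; exact: ltW.
Qed.

Lemma borel_density_zero A : borel_set [set x | density_zero A x].
Proof.
have [alpha0|alpha_gt0] : @alpha R n = 0 \/ 0 < @alpha R n.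
  by have := alpha_ge0; rewrite le_eqVlt => /predU1P [<-|]; [left|right].
- rewrite (_ : [set x | _] = setT); first by apply: borel_open; exact: openT.
  by apply/seteqP; split=> // x _; exact: density_zero_alpha0.
- rewrite (_ : [set x | _] = [set x | eventually_light A x]).
    exact: borel_eventually_light.
  apply/seteqP; split=> x.
    exact: density_zero_eventually_light.
  exact: eventually_light_density_zero.
Qed.

Lemma ap_liminf_gtE (f : 'rV[R]_n -> \bar R) (r : R) :
  [set x | (r%:E < ap_liminf f x)%E] =
  \bigcup_m [set x | density_zero [set y | (f y < (r + harmonic m)%:E)%E] x].
Proof.
apply/seteqP; split=> x /=.
  move=> /ereal_sup_gt [_ [t dens_t <-]]; rewrite lte_fin => rt.
  have [m hm] : exists m, harmonic m < t - r by apply: exists_harmonic_lt; rewrite subr_gt0.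
  exists m => //.
  apply: density_zero_sub dens_t => y /= /lt_le_trans; apply.
  by rewrite lee_fin -lerBrDl ltW.
move=> [m _ dens_m]; apply: (@lt_le_trans _ _ (r + harmonic m)%:E).
  by rewrite lte_fin ltrDl harmonic_gt0.
by apply: ereal_sup_ubound; exists (r + harmonic m).
Qed.

End Density.

Theorem lemma4p7 (R : realType) (n : nat) (f : 'rV[R]_n -> \bar R) :
  borel_fun (ap_liminf f).
Proof.
case: n f => [|n] f; first by move=> B _; exact: borel_set_rV0.
apply: borel_fun_from_gt => r; rewrite ap_liminf_gtE //.
by apply: borel_bigcup => m; exact: borel_density_zero.
Qed.
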